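(* Let $\mathbb{B}=\mathbb{C}\otimes\mathbb{H}$ be the algebra of complexified quaternions, whose elements are written $x=(x_1,x_2,x_3,x_4)$ to mean $x=x_1+x_2\hat{i}+x_3\hat{j}+x_4\hat{k}$ with $x_1,\dots,x_4\in\mathbb{C}$. The quaternion units satisfy $\hat{i}^2=\hat{j}^2=\hat{k}^2=\hat{i}\hat{j}\hat{k}=-1$, and multiplication is extended $\mathbb{C}$-bilinearly, with the complex scalars commuting with $\hat{i},\hat{j},\hat{k}$. Call $x\in\mathbb{B}$ entangled if its concurrence $C(x)=2\,|x_1x_4-x_2x_3|$ is nonzero. Let $\alpha,\beta\in\mathbb{C}$ with $\alpha\neq0$, $\beta\neq0$ and $|\alpha|^2+|\beta|^2=1$. Let $q$ be one of $$(\alpha,\beta,0,0),\quad (0,0,\alpha,\beta),\quad (\alpha,0,\beta,0),\quad (0,\alpha,0,\beta).$$ Let $p=(a_1,a_2,a_3,a_4)$ with $a_1,\dots,a_4\in\mathbb{R}$ and $a_1^2+a_2^2+a_3^2+a_4^2=1$, and suppose $p$ satisfies: (R1) $p$ is not entangled, i.e. $a_1a_4=a_2a_3$; (R2) $p$ is not a pure state, i.e. at least two of $a_1,\dots,a_4$ are nonzero; (R3) $p$ is connected to $q$ in exactly one direction, i.e. there is exactly one index $m\in\{1,2,3,4\}$ for which both the $m$-th coordinate of $p$ and the $m$-th coordinate of $q$ are nonzero. Then $\Lambda(q):=pqp$ is entangled, i.e. $C(pqp)\neq0$.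
   Context: In the paper, a one-particle state $\alpha|0\rangle+\beta|1\rangle$ with $|\alpha|^2+|\beta|^2=1$ is embedded in $\mathbb{B}$ in one of the four listed ways. The map $\Lambda(q)=pqp$, with $p$ a real unit quaternion, is proposed as an ''entanglement operator''. The concurrence of $x=(x_1,x_2,x_3,x_4)$ is $C(x)=2|x_1x_4-x_2x_3|$, and $x$ is called entangled iff $C(x)\neq0$. A ''pure state'' in $\mathbb{B}$ means an element with only one nonzero coordinate. *)

(* complex numbers R[i] over an arbitrary real closed field R
   (this includes the real numbers; the statement is purely algebraic). *)
From HB Require Import structures.
From mathcomp Require Import all_boot all_order all_algebra.
From mathcomp Require Import complex.
Set Implicit Arguments. Unset Strict Implicit. Unset Printing Implicit Defensive.
Import Order.TTheory GRing.Theory Num.Theory.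
Local Open Scope ring_scope.

Record cquat (R : rcfType) := CQuat {
  cq1 : R[i]; cq2 : R[i]; cq3 : R[i]; cq4 : R[i] }.

(* coordinate m (m = 0,1,2,3 corresponds to the paper's 1,2,3,4) *)
Definition cqcoord (R : rcfType) (x : cquat R) (m : 'I_4) : R[i] :=
  match val m with
  | 0 => cq1 x | 1 => cq2 x | 2 => cq3 x | _ => cq4 x end.

(* Hamilton product, extended C-bilinearly (i^2=j^2=k^2=ijk=-1). *)
Definition cqmul (R : rcfType) (x y : cquat R) : cquat R :=
  let: CQuat a1 b1 c1 d1 := x in
  let: CQuat a2 b2 c2 d2 := y in
  CQuat (a1*a2 - b1*b2 - c1*c2 - d1*d2)
        (a1*b2 + b1*a2 + c1*d2 - d1*c2)
        (a1*c2 - b1*d2 + c1*a2 + d1*b2)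
        (a1*d2 + b1*c2 - c1*b2 + d1*a2).

Definition concurrence (R : rcfType) (x : cquat R) : R[i] :=
  2 * `|cq1 x * cq4 x - cq2 x * cq3 x|.

Definition entangled (R : rcfType) (x : cquat R) : Prop := concurrence x != 0.

Definition pure_state (R : rcfType) (x : cquat R) : Prop :=
  #|[set m : 'I_4 | cqcoord x m != 0]| = 1%N.

Definition connections (R : rcfType) (x y : cquat R) : nat :=
  #|[set m : 'I_4 | (cqcoord x m != 0) && (cqcoord y m != 0)]|.

(* A real, non-entangled p = (a1, a2, a3, a4) satisfies a1 a4 = a2 a3, i.e. the
   matrix [[a1, a2], [a3, a4]] is singular.  Being non-pure and meeting the support
   of q (a row or a column of that matrix) exactly once forces p onto a single
   column, resp. a single row: p = u + v j, u i + v k, u + v i or u j + v k with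
   u, v nonzero reals.  For p = u + v j a direct computation gives
     x1 x4 - x2 x3 for x = pqp  =  (u^2 + v^2) ((u^2 - v^2) det q - 2uv (q1 q2 + q3 q4)),
   and similarly in the other three cases.  For the listed q we have det q = 0 and
   q1 q2 + q3 q4 = alpha beta (resp. q1 q3 + q2 q4 = alpha beta), so the concurrence
   of pqp is 4 |uv (u^2 + v^2) alpha beta| > 0. *)

From HB Require Import structures.
From mathcomp Require Import all_boot all_order all_algebra.
From mathcomp Require Import complex ring zify.
Set Implicit Arguments. Unset Strict Implicit. Unset Printing Implicit Defensive.
Import Order.TTheory GRing.Theory Num.Theory.
Local Open Scope ring_scope.
Local Open Scope complex_scope.

(* (a, b, c, d) is read as the matrix [[a, b], [c, d]]. *)
Lemma rank_one_support_column (R : idomainType) (a b c d : R) :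
  a * d = b * c ->
  (2 <= (a != 0%R) + (b != 0%R) + (c != 0%R) + (d != 0%R))%N ->
  ((a != 0%R) + (b != 0%R) = 1)%N \/ ((c != 0%R) + (d != 0%R) = 1)%N ->
  (b = 0 /\ d = 0 /\ a != 0 /\ c != 0) \/ (a = 0 /\ c = 0 /\ b != 0 /\ d != 0).
Proof.
(* Only the zero pattern of a d = b c matters. *)
move=> /(congr1 (fun x => x != 0)); rewrite !mulf_eq0 !negb_or.
have [-> | a0] := eqVneq a 0; have [-> | b0] := eqVneq b 0;
have [-> | c0] := eqVneq c 0; have [-> | d0] := eqVneq d 0;
rewrite ?eqxx ?a0 ?b0 ?c0 ?d0 //=; try lia; by [left | right].
Qed.

Lemma card_set_sum (T : finType) (P : pred T) : (#|[set x | P x]| = \sum_x P x)%N.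
Proof.
rewrite -sum1_card big_mkcond /=.
by apply: eq_bigr => x _; rewrite inE; case: (P x).
Qed.

Section ComplexifiedQuaternions.
Variable R : rcfType.
Implicit Types x p q : cquat R.

Definition cqdet x : R[i] := cq1 x * cq4 x - cq2 x * cq3 x.

Lemma concurrence_eq0 x : (concurrence x == 0) = (cqdet x == 0).
Proof. by rewrite /concurrence mulf_eq0 pnatr_eq0 normr_eq0. Qed.

Definition rquat (a1 a2 a3 a4 : R) : cquat R := CQuat a1%:C a2%:C a3%:C a4%:C.

Lemma not_entangled_rquat (a1 a2 a3 a4 : R) :
  ~ entangled (rquat a1 a2 a3 a4) -> a1 * a4 = a2 * a3.
Proof.
move/negP; rewrite negbK concurrence_eq0 /cqdet /= -!rmorphM -rmorphB.
by rewrite fmorph_eq0 subr_eq0 => /eqP.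
Qed.

Lemma card_support_rquat (a1 a2 a3 a4 : R) :
  #|[set m : 'I_4 | cqcoord (rquat a1 a2 a3 a4) m != 0]| =
  ((a1 != 0%R) + (a2 != 0%R) + (a3 != 0%R) + (a4 != 0%R))%N.
Proof. by rewrite card_set_sum !big_ord_recl big_ord0 /= !fmorph_eq0 !addnA addn0. Qed.

Lemma connections_rquat (a1 a2 a3 a4 : R) (b1 b2 b3 b4 : R[i]) :
  connections (rquat a1 a2 a3 a4) (CQuat b1 b2 b3 b4) =
  ((a1 != 0%R) && (b1 != 0%R) + (a2 != 0%R) && (b2 != 0%R)
   + (a3 != 0%R) && (b3 != 0%R) + (a4 != 0%R) && (b4 != 0%R))%N.
Proof.
by rewrite /connections card_set_sum !big_ord_recl big_ord0 /= !fmorph_eq0 !addnA addn0.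
Qed.

Definition sandwich p q := cqmul (cqmul p q) p.

Lemma cqdet_sandwich_1j (u v : R[i]) q :
  cqdet (sandwich (CQuat u 0 v 0) q) =
  (u ^+ 2 + v ^+ 2) *
  ((u ^+ 2 - v ^+ 2) * cqdet q - 2 * u * v * (cq1 q * cq2 q + cq3 q * cq4 q)).
Proof. by case: q => a b c d; rewrite /cqdet /sandwich /=; ring. Qed.

Lemma cqdet_sandwich_ik (u v : R[i]) q :
  cqdet (sandwich (CQuat 0 u 0 v) q) =
  - ((u ^+ 2 + v ^+ 2) *
  ((u ^+ 2 - v ^+ 2) * cqdet q - 2 * u * v * (cq1 q * cq2 q + cq3 q * cq4 q))).
Proof. by case: q => a b c d; rewrite /cqdet /sandwich /=; ring. Qed.

Lemma cqdet_sandwich_1i (u v : R[i]) q :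
  cqdet (sandwich (CQuat u v 0 0) q) =
  (u ^+ 2 + v ^+ 2) *
  ((u ^+ 2 - v ^+ 2) * cqdet q - 2 * u * v * (cq1 q * cq3 q + cq2 q * cq4 q)).
Proof. by case: q => a b c d; rewrite /cqdet /sandwich /=; ring. Qed.

Lemma cqdet_sandwich_jk (u v : R[i]) q :
  cqdet (sandwich (CQuat 0 0 u v) q) =
  - ((u ^+ 2 + v ^+ 2) *
  ((u ^+ 2 - v ^+ 2) * cqdet q - 2 * u * v * (cq1 q * cq3 q + cq2 q * cq4 q))).
Proof. by case: q => a b c d; rewrite /cqdet /sandwich /=; ring. Qed.

Lemma sandwich_factor_neq0 (u v : R) (s : R[i]) : u != 0 -> v != 0 -> s != 0 ->
  (u%:C ^+ 2 + v%:C ^+ 2) * (2 * u%:C * v%:C * s) != 0 :> R[i].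
Proof.
move=> u0 v0 s0; rewrite -!rmorphXn -rmorphD !mulf_neq0 ?pnatr_eq0 ?fmorph_eq0 //.
by rewrite paddr_eq0 ?sqr_ge0 // sqrf_eq0 (negbTE u0).
Qed.

Lemma entangled_sandwich_column (a1 a2 a3 a4 : R) q :
  (a2 = 0 /\ a4 = 0 /\ a1 != 0 /\ a3 != 0) \/
  (a1 = 0 /\ a3 = 0 /\ a2 != 0 /\ a4 != 0) ->
  cqdet q = 0 -> cq1 q * cq2 q + cq3 q * cq4 q != 0 ->
  entangled (sandwich (rquat a1 a2 a3 a4) q).
Proof.
move=> hp hq hs; rewrite /entangled concurrence_eq0 /rquat.
case: hp => [[-> [-> [h1 h3]]] | [-> [-> [h2 h4]]]];
  rewrite rmorph0 ?cqdet_sandwich_1j ?cqdet_sandwich_ik hq mulr0 sub0r mulrN ?oppr_eq0;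
  exact: sandwich_factor_neq0.
Qed.

Lemma entangled_sandwich_row (a1 a2 a3 a4 : R) q :
  (a3 = 0 /\ a4 = 0 /\ a1 != 0 /\ a2 != 0) \/
  (a1 = 0 /\ a2 = 0 /\ a3 != 0 /\ a4 != 0) ->
  cqdet q = 0 -> cq1 q * cq3 q + cq2 q * cq4 q != 0 ->
  entangled (sandwich (rquat a1 a2 a3 a4) q).
Proof.
move=> hp hq hs; rewrite /entangled concurrence_eq0 /rquat.
case: hp => [[-> [-> [h1 h2]]] | [-> [-> [h3 h4]]]];
  rewrite rmorph0 ?cqdet_sandwich_1i ?cqdet_sandwich_jk hq mulr0 sub0r mulrN ?oppr_eq0;
  exact: sandwich_factor_neq0.
Qed.

End ComplexifiedQuaternions.

Theorem mainTheorem1 (R : rcfType) (alpha beta : R[i]) (q : cquat R)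
    (a1 a2 a3 a4 : R) :
  alpha != 0 -> beta != 0 -> `|alpha| ^+ 2 + `|beta| ^+ 2 = 1 ->
  (q = CQuat alpha beta 0 0 \/ q = CQuat 0 0 alpha beta \/
   q = CQuat alpha 0 beta 0 \/ q = CQuat 0 alpha 0 beta) ->
  a1 ^+ 2 + a2 ^+ 2 + a3 ^+ 2 + a4 ^+ 2 = 1 ->
  let p := CQuat (a1%:C)%C (a2%:C)%C (a3%:C)%C (a4%:C)%C in
  ~ entangled p ->
  (#|[set m : 'I_4 | cqcoord p m != 0%R]| >= 2)%N ->
  connections p q = 1%N ->
  entangled (cqmul (cqmul p q) p).
Proof.
move=> alpha0 beta0 _ hq _ p; rewrite {}/p -/(rquat a1 a2 a3 a4) -/(sandwich _ q).
move=> /not_entangled_rquat hdet; rewrite card_support_rquat => hcard.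
have hdetT : a1 * a4 = a3 * a2 by rewrite hdet mulrC.
have hcardT : (2 <= (a1 != 0%R) + (a3 != 0%R) + (a2 != 0%R) + (a4 != 0%R))%N by lia.
have ab0 : alpha * beta != 0 by rewrite mulf_neq0.
case: hq => [|[|[|]]] ->; rewrite connections_rquat /= alpha0 beta0 eqxx !andbT !andbF
  ?add0n ?addn0 => hconn;
  [ apply: entangled_sandwich_column (rank_one_support_column hdet hcard (or_introl hconn)) _ _
  | apply: entangled_sandwich_column (rank_one_support_column hdet hcard (or_intror hconn)) _ _
  | apply: entangled_sandwich_row (rank_one_support_column hdetT hcardT (or_introl hconn)) _ _
  | apply: entangled_sandwich_row (rank_one_support_column hdetT hcardT (or_intror hconn)) _ _ ];
  by rewrite /cqdet /= ?mulr0 ?mul0r ?subrr ?addr0 ?add0r.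
Qed.
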